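(* Fix an integer $\ell>6$ and a real $t>0$. For integers $k>2$ let $T=\lfloor tk\rfloor$ and let $H_{\ell,k,t}$ be the graph constructed as follows: for each $1\le r\le k$ take disjoint paths $x_{0,r}x_{1,r}\cdots x_{\ell+1,r}$ and $y_{0,r}y_{1,r}y_{2,r}y_{3,r}y_{4,r}y_{5,r}$; identify all $x_{0,r},y_{0,r}$ into a single vertex $u$; identify all $x_{\ell+1,r},y_{5,r}$ into a single vertex $v$; identify $y_{2,1},\dots,y_{2,k}$ into a single vertex $y_{2,*}$ and $y_{3,1},\dots,y_{3,k}$ into a single vertex $y_{3,*}$ (the $k$ edges $y_{2,r}y_{3,r}$ becoming a single edge); finally add $T$ pendant vertices $u_1,\dots,u_T$ adjacent to $u$ and $T$ pendant vertices $v_1,\dots,v_T$ adjacent to $v$. Then for all sufficiently large $k$, the spectral path from $v_1$ to $u_1$ (with special vertex $u_1$) has length $\ell+3$, while the distance between $v_1$ and $u_1$ is $7$.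
   Context: For a finite connected graph $G$ with Laplacian $L=D-A$ and special vertex $s$ such that $G-s$ is connected, let $L_s$ be $L$ with row and column $s$ deleted, and let $f_s$ be an eigenvector of $L_s$ for its smallest eigenvalue, chosen positive on $V\setminus\{s\}$ (possible by a result of Steinerberger), extended by $f_s(s)=0$. Every vertex $x\ne s$ has a neighbor with strictly smaller $f_s$-value. The spectral tree $T_s$ is formed by joining each vertex $x\neq s$ to a neighbor minimizing $f_s$ (ties broken arbitrarily); the spectral path from $x$ to $s$ is the unique path from $x$ to $s$ in $T_s$. Length of a path is its number of edges. *)

From HB Require Import structures.
From mathcomp Require Import all_boot all_order all_algebra.
From mathcomp Require Import reals.
Set Implicit Arguments. Unset Strict Implicit. Unset Printing Implicit Defensive.
Import Order.TTheory GRing.Theory Num.Theory.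
Local Open Scope ring_scope.

(* Vertices (with T pendant vertices on each side):
   HU            = u
   HV            = v
   HX i r        = x_{i+1, r+1}    (i : 'I_l, so x_1 .. x_l; r : 'I_k)
   HY1 r         = y_{1, r+1}
   HY4 r         = y_{4, r+1}
   HY2           = y_{2,*}
   HY3           = y_{3,*}
   HPU j         = u_{j+1}        (j : 'I_T)
   HPV j         = v_{j+1}        (j : 'I_T)
   (x_{0,r} = y_{0,r} = u and x_{l+1,r} = y_{5,r} = v after identification.) *)
Inductive hvert (l k T : nat) : Type :=
| HU | HV
| HX of 'I_l & 'I_k
| HY1 of 'I_k | HY4 of 'I_k
| HY2 | HY3
| HPU of 'I_T | HPV of 'I_T.

Arguments HU {l k T}. Arguments HV {l k T}.
Arguments HY2 {l k T}. Arguments HY3 {l k T}.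
Arguments HX {l k T}. Arguments HY1 {l k T}. Arguments HY4 {l k T}.
Arguments HPU {l k T}. Arguments HPV {l k T}.

Section HvertFin.
Variables l k T : nat.
Definition hcode_t : Type :=
  (((unit + unit) + ('I_l * 'I_k)) + ('I_k + 'I_k)) + ((unit + unit) + ('I_T + 'I_T)).
Definition hencode (x : hvert l k T) : hcode_t :=
  match x with
  | HU => inl (inl (inl (inl tt)))
  | HV => inl (inl (inl (inr tt)))
  | HX i r => inl (inl (inr (i, r)))
  | HY1 r => inl (inr (inl r))
  | HY4 r => inl (inr (inr r))
  | HY2 => inr (inl (inl tt))
  | HY3 => inr (inl (inr tt))
  | HPU j => inr (inr (inl j))
  | HPV j => inr (inr (inr j))
  end.
Definition hdecode (c : hcode_t) : hvert l k T :=
  match c with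
  | inl (inl (inl (inl _))) => HU
  | inl (inl (inl (inr _))) => HV
  | inl (inl (inr (i, r))) => HX i r
  | inl (inr (inl r)) => HY1 r
  | inl (inr (inr r)) => HY4 r
  | inr (inl (inl _)) => HY2
  | inr (inl (inr _)) => HY3
  | inr (inr (inl j)) => HPU j
  | inr (inr (inr j)) => HPV j
  end.
Lemma hencodeK : cancel hencode hdecode. Proof. by case. Qed.
HB.instance Definition _ := Equality.copy (hvert l k T) (can_type hencodeK).
HB.instance Definition _ := Choice.copy (hvert l k T) (can_type hencodeK).
HB.instance Definition _ := Countable.copy (hvert l k T) (can_type hencodeK).
HB.instance Definition _ := Finite.copy (hvert l k T) (can_type hencodeK).
End HvertFin.

Definition hedge (l k T : nat) (a b : hvert l k T) : bool :=
  match a, b with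
  | HU, HX i _ => val i == 0%N
  | HX i r, HX i' r' => (r == r') && (val i' == (val i).+1)
  | HX i _, HV => val i == l.-1
  | HU, HY1 _ => true
  | HY1 _, HY2 => true
  | HY2, HY3 => true
  | HY3, HY4 _ => true
  | HY4 _, HV => true
  | HU, HPU _ => true
  | HV, HPV _ => true
  | _, _ => false
  end.

Definition hadj (l k T : nat) : rel (hvert l k T) :=
  fun a b => hedge a b || hedge b a.

(* T = floor (t k) (t > 0, so truncn = floor). *)
Definition Tof (R : realType) (t : R) (k : nat) : nat := Num.truncn (t * k%:R).

Section GraphNotions.
Variables (R : realType) (V : finType) (adj : rel V).

Definition deg (x : V) : nat := #|[set y | adj x y]|.

Definition lap (g : V -> R) (x : V) : R :=
  (deg x)%:R * g x - \sum_(y | adj x y) g y.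

(* Vectors of R^(V \ {s}) are represented as functions V -> R vanishing at s;
   then (L_s g)(x) = (L g)(x) for x != s.
   mu is an eigenvalue of L_s with eigenvector g: *)
Definition Ls_eigenpair (s : V) (mu : R) (g : V -> R) : Prop :=
  g s = 0 /\ (exists x, x != s /\ g x != 0) /\
  (forall x, x != s -> lap g x = mu * g x).

Definition Ls_eigenvalue (s : V) (mu : R) : Prop :=
  exists g, Ls_eigenpair s mu g.

Definition is_fs (s : V) (f : V -> R) : Prop :=
  (exists lam, Ls_eigenpair s lam f /\ forall mu, Ls_eigenvalue s mu -> lam <= mu)
  /\ (forall x, x != s -> 0 < f x).

(* p is a parent map of a spectral tree T_s: each x != s is joined to a
   neighbour p x minimising f (ties broken arbitrarily). *)
Definition spectral_parent (s : V) (f : V -> R) (p : V -> V) : Prop :=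
  forall x, x != s -> adj x (p x) /\ (forall y, adj x y -> f (p x) <= f y).

(* The spectral path from x to s (the path from x to s in T_s, i.e. the
   parent chain) has length n. *)
Definition spectral_path_length (s : V) (p : V -> V) (x : V) (n : nat) : Prop :=
  iter n p x = s /\ forall m, (m < n)%N -> iter m p x != s.

Definition gdist (x y : V) (n : nat) : Prop :=
  (exists q : seq V, [/\ path adj x q, last x q = y & size q = n]) /\
  (forall q : seq V, path adj x q -> last x q = y -> (n <= size q)%N).

End GraphNotions.

From HB Require Import structures.
From mathcomp Require Import all_boot all_order all_algebra.
From mathcomp Require Import reals.
From mathcomp Require Import ring lra zify.
Import Order.TTheory GRing.Theory Num.Theory.
Local Open Scope ring_scope.
Set Implicit Arguments. Unset Strict Implicit. Unset Printing Implicit Defensive.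

(* Let [lam] be the smallest eigenvalue of [L_(u_1)] and [f = f_(u_1)]. Summing
   the eigen-equations gives [lam * \sum_x f x = f u], while each of the [T - 1]
   pendant vertices [u_j], [j > 1], carries at least [f u]; hence
   [lam <= 1 / (T - 1) = O(1/k)]. Along each path [u x_(1,r) ... x_(l,r) v] the
   values of [f] satisfy [g_(j+1) = (2 - lam) g_j - g_(j-1)], whose Dirichlet
   problem is uniquely solvable while [lam (l+1)^2 < 1]: all [k] paths carry the
   same, nearly linear, values. Fed into the eigen-equations at [v], [y_4], [y_3],
   [y_2], [y_1], this gives [f x_l < f v] and [f x_l < f y_4] once [T] is large
   compared to [l^3] and [l t]. So the spectral path from [v_1] is
   [v_1 v x_l ... x_1 u u_1], of length [l + 3], whereas the path through the
   [y]'s has length 7. *)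

Section Laplacian.
Variables (R : realType) (V : finType) (adj : rel V).

Lemma lapE (g : V -> R) x : lap adj g x = \sum_(y | adj x y) (g x - g y).
Proof.
rewrite /lap /deg sumrB; congr (_ - _).
rewrite sumr_const mulr_natl; congr (_ *+ _).
by apply: eq_card => y; rewrite inE.
Qed.

Lemma sum_lap_eq0 (g : V -> R) : symmetric adj -> \sum_x lap adj g x = 0.
Proof.
move=> adjC; under eq_bigr do rewrite lapE sumrB.
rewrite sumrB [X in _ - X](exchange_big_dep xpredT) //=.
rewrite [X in _ - X](eq_bigr (fun y => \sum_(x | adj y x) g y)) ?subrr //.
by move=> y _; apply: eq_bigl => x; rewrite adjC.
Qed.

End Laplacian.

Section ThreeTermRecurrence.
Variable R : realFieldType.
Implicit Types (lam M : R) (g h : nat -> R).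

Definition three_term lam g n :=
  forall j, (0 < j < n)%N -> g j.+1 = (2 - lam) * g j - g j.-1.

(* The solution with initial values 0 and 1: [chebU lam j = U_(j-1)(1 - lam/2)]
   for the Chebyshev polynomials U of the second kind. *)
Fixpoint chebU lam j : R :=
  match j with
  | 0 => 0
  | 1 => 1
  | (j.+1 as j').+1 => (2 - lam) * chebU lam j' - chebU lam j
  end.

Lemma chebU_bounds lam n : 0 <= lam -> lam * n%:R ^+ 2 <= 1 ->
  forall i, (i <= n)%N ->
  [/\ 0 <= chebU lam i, chebU lam i <= i%:R,
      1 - lam * i%:R ^+ 2 <= chebU lam i.+1 - chebU lam i
    & chebU lam i.+1 - chebU lam i <= 1].
Proof.
move=> l0 ln; elim=> [|i IH] Hi.
  by rewrite /= expr0n /= mulr0 subr0; split=> //; lra.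
have [u0 ui e1 e2] := IH (ltnW Hi).
have Hl : lam * i.+1%:R ^+ 2 <= 1.
  by apply: le_trans ln; rewrite ler_wpM2l // lerXn2r ?nnegrE ?ler0n ?ler_nat.
have -> : chebU lam i.+2 = (2 - lam) * chebU lam i.+1 - chebU lam i by [].
rewrite -natr1 in Hl *.
have hi0 : 0 <= i%:R :> R by [].
set x := i%:R in ui e1 Hl hi0 *.
set u := chebU lam i in u0 ui e1 e2 *.
set w := chebU lam i.+1 in e1 e2 *.
have w0 : 0 <= w.
  have : lam * x ^+ 2 <= lam * (x + 1) ^+ 2 by nra.
  lra.
have p1 : lam * w <= lam * (x + 1) by nra.
have p2 : 0 <= lam * w by nra.
have p3 : 0 <= lam * x by nra.
have -> : (2 - lam) * w - u - w = (w - u) - lam * w by ring.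
have q : lam * (x + 1) ^+ 2 = lam * x ^+ 2 + 2 * (lam * x) + lam by ring.
rewrite q in Hl *.
split; lra.
Qed.

Lemma chebU_gt0 lam n : 0 <= lam -> lam * n%:R ^+ 2 < 1 -> (0 < n)%N ->
  0 < chebU lam n.
Proof.
case: n => // m l0 ln _.
have lm : lam * m%:R ^+ 2 < 1.
  by apply: le_lt_trans ln; rewrite ler_wpM2l // lerXn2r ?nnegrE ?ler0n ?ler_nat.
have [u0 _ e1 _] := chebU_bounds l0 (ltW ln) (leqnSn m).
lra.
Qed.

Lemma three_term_linear lam g n : g 0%N = 0 -> three_term lam g n ->
  forall j, (j <= n)%N -> g j = g 1%N * chebU lam j.
Proof.
move=> g0 rec.
suff H j : (j < n)%N -> g j = g 1%N * chebU lam j /\ g j.+1 = g 1%N * chebU lam j.+1.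
  by case=> [|j] Hj; [rewrite g0 mulr0 | have [_ ->] := H j Hj].
elim: j => [|j IH] Hj; first by rewrite g0 /= mulr0 mulr1.
have [IH1 IH2] := IH (ltnW Hj); split=> //.
by rewrite rec /= ?Hj // IH1 IH2 /=; ring.
Qed.

Lemma three_term_unique lam n g h : 0 <= lam -> lam * n%:R ^+ 2 < 1 ->
  (0 < n)%N -> three_term lam g n -> three_term lam h n ->
  g 0%N = h 0%N -> g n = h n -> forall j, (j <= n)%N -> g j = h j.
Proof.
move=> l0 ln n0 rg rh e0 en j jn.
pose d i := g i - h i.
have rd : three_term lam d n by move=> i Hi; rewrite /d rg // rh //; ring.
have d0 : d 0%N = 0 by rewrite /d e0 subrr.
have lin := three_term_linear d0 rd.
have d1 : d 1%N = 0.
  have := lin n (leqnn n); rewrite {1}/d en subrr => /esym/eqP.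
  by rewrite mulf_eq0 (gt_eqF (chebU_gt0 l0 ln n0)) orbF => /eqP.
by apply/eqP; rewrite -subr_eq0 -/(d j) lin // d1 mul0r.
Qed.

Lemma three_term_incrementE lam g n i : three_term lam g n -> (0 < i < n)%N ->
  g i - g i.-1 = (g i.+1 - g i) + lam * g i.
Proof. by move=> r Hi; rewrite (r i Hi); ring. Qed.

Lemma three_term_increment_le lam M g n i : 0 <= lam -> three_term lam g n ->
  (forall j, (0 < j < n)%N -> g j <= M) -> (0 < i <= n)%N ->
  g i - g i.-1 <= g n - g n.-1 + lam * (n - i)%:R * M.
Proof.
move=> l0 r gM /andP[i0 ni]; move Em: (n - i)%N => m.
elim: m i i0 ni Em => [|m IH] i i0 ni Em.
  have -> : i = n by lia.
  by rewrite mulr0 mul0r addr0.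
have Hi : (0 < i < n)%N by lia.
have := IH i.+1 isT ltac:(lia) ltac:(lia); rewrite -pred_Sn.
have : lam * g i <= lam * M by rewrite ler_wpM2l ?gM.
rewrite (three_term_incrementE r Hi) -natr1; lra.
Qed.

Lemma three_term_increment_gt0 lam g n i : 0 <= lam -> three_term lam g n ->
  (forall j, (0 < j < n)%N -> 0 <= g j) -> 0 < g n - g n.-1 ->
  (0 < i <= n)%N -> 0 < g i - g i.-1.
Proof.
move=> l0 r gp dn /andP[i0 ni]; move Em: (n - i)%N => m.
elim: m i i0 ni Em => [|m IH] i i0 ni Em.
  have -> : i = n by lia.
  done.
have Hi : (0 < i < n)%N by lia.
have := IH i.+1 isT ltac:(lia) ltac:(lia); rewrite -pred_Sn.
have : 0 <= lam * g i by rewrite mulr_ge0 ?gp.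
rewrite (three_term_incrementE r Hi); lra.
Qed.

Lemma three_term_le_linear lam M g n : 0 <= lam -> 0 <= M -> three_term lam g n ->
  (forall j, (0 < j < n)%N -> g j <= M) ->
  forall j, (j <= n)%N -> g j <= g 0%N + j%:R * (g n - g n.-1 + lam * n%:R * M).
Proof.
move=> l0 M0 r gM; elim=> [|j IH] Hj; first by rewrite mul0r addr0.
have := three_term_increment_le l0 r gM (i := j.+1) ltac:(lia).
have : lam * (n - j.+1)%:R * M <= lam * n%:R * M.
  by rewrite -!mulrA ler_wpM2l // ler_wpM2r // ler_nat leq_subr.
have := IH (ltnW Hj); rewrite -pred_Sn -natr1; lra.
Qed.

Lemma three_term_le_last lam g n : 0 <= lam -> three_term lam g n ->
  (forall j, (0 < j < n)%N -> 0 <= g j) -> 0 < g n - g n.-1 ->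
  forall j, (j <= n)%N -> g j <= g n.
Proof.
move=> l0 r gp dn j; move Em: (n - j)%N => m.
elim: m j Em => [|m IH] j Em jn.
  have -> : j = n by lia.
  done.
have := IH j.+1 ltac:(lia) ltac:(lia).
have := three_term_increment_gt0 l0 r gp dn (i := j.+1) ltac:(lia).
rewrite -pred_Sn; lra.
Qed.

End ThreeTermRecurrence.

(* The arguments are the values of [f] at the vertices of the same name,
   with [kr = k] and [Tr = T]; [q] is the value at the [v_j]. *)
Section BalanceInequalities.
Variable R : realFieldType.

Lemma u_le_y2 (lam kr u y1 y2 y3 : R) : 0 < lam -> lam <= 1/2 -> 1 <= kr -> 0 < y2 ->
  (y1 - u) + (y1 - y2) = lam * y1 -> kr * (y2 - y1) + (y2 - y3) = lam * y2 ->
  y2 <= y3 -> u <= y2.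
Proof.
move=> l0 l1 k1 y20 eq_y1 eq_y2 y23.
have e1 : kr * y1 <= (kr - lam) * y2 by rewrite mulrBl; move: eq_y2; rewrite mulrBr; lra.
have e2 : (2 - lam) * y1 = u + y2 by rewrite mulrBl; move: eq_y1; lra.
have e3 : kr * (u + y2) <= (2 - lam) * ((kr - lam) * y2).
  by rewrite -e2 mulrA (mulrC kr) -mulrA ler_wpM2l //; lra.
have e4 : (2 - lam) * (kr - lam) <= 2 * kr.
  have : 0 <= lam * (2 + kr - lam) by apply: mulr_ge0; lra.
  have -> : (2 - lam) * (kr - lam) = 2 * kr - lam * (2 + kr - lam) by ring.
  lra.
have e5 : (2 - lam) * ((kr - lam) * y2) <= kr * (y2 + y2).
  rewrite mulrA (_ : kr * (y2 + y2) = 2 * kr * y2); last by ring.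
  by rewrite ler_wpM2r // ltW.
have := le_trans e3 e5; rewrite ler_pM2l; lra.
Qed.

Lemma arm_drop_lt (lam kr u v y1 y2 y3 y4 : R) :
  0 < lam -> lam <= 1/2 -> 1 <= kr -> 0 < y2 -> 0 < y3 -> 0 < y4 ->
  (y1 - u) + (y1 - y2) = lam * y1 -> kr * (y2 - y1) + (y2 - y3) = lam * y2 ->
  kr * (y3 - y4) + (y3 - y2) = lam * y3 -> (y4 - y3) + (y4 - v) = lam * y4 ->
  y4 <= v -> kr * (v - y4) < v - u.
Proof.
move=> l0 l1 k1 y20 y30 y40 eq_y1 eq_y2 eq_y3 eq_y4 y4v.
have d4 : v - y4 <= y4 - y3 by have := mulr_gt0 l0 y40; move: eq_y4; lra.
have d3 : kr * (y4 - y3) < y3 - y2.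
  have : y3 - y2 = lam * y3 + kr * (y4 - y3) by move: eq_y3; rewrite !mulrBr; lra.
  by have := mulr_gt0 l0 y30; lra.
have d34 : kr * (v - y4) <= kr * (y4 - y3) by rewrite ler_wpM2l //; lra.
have : u <= y2.
  apply: (u_le_y2 l0 l1 k1 y20 eq_y1 eq_y2).
  have : 0 <= kr * (v - y4) by apply: mulr_ge0; lra.
  lra.
lra.
Qed.

(* If [v <= xl], the flux [lam v + lam T q] into [v] must enter through the
   [y]-arms, whose drop is less than [v - u]; this contradicts [v - u <= lam C u]. *)
Lemma xl_lt_v (lam kr u v y4 q xl Tr C : R) :
  0 < lam -> 1 <= kr -> 0 < v -> 0 < q -> 0 <= Tr -> 0 <= C ->
  kr * (v - xl) + kr * (v - y4) + Tr * (v - q) = lam * v -> q - v = lam * q ->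
  (y4 <= v -> kr * (v - y4) < v - u) ->
  (v <= xl -> v - u <= lam * C * u) -> C <= Tr -> xl < v.
Proof.
move=> l0 k1 v0 q0 T0 C0 eq_v eq_q arm_drop drop_uv CT.
rewrite ltNge; apply/negP => vxl.
have vq : v <= q by have := mulr_gt0 l0 q0; move: eq_q; lra.
have flux : kr * (v - y4) = lam * v + lam * (Tr * q) + kr * (xl - v).
  have : Tr * (q - v) = lam * (Tr * q) by rewrite eq_q; ring.
  by move: eq_v; rewrite !mulrBr; lra.
have p1 : 0 <= kr * (xl - v) by rewrite mulr_ge0 //; lra.
have p2 : lam * (Tr * v) <= lam * (Tr * q) by rewrite !ler_wpM2l // ltW.
have p3 : 0 < lam * v by rewrite mulr_gt0.
have p4 : 0 <= lam * (Tr * v) by rewrite !mulr_ge0 // ltW.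
have drop_v : lam * (Tr * v) < v - u.
  have y4v : y4 <= v.
    have : 0 < kr * (v - y4) by lra.
    rewrite pmulr_rgt0; lra.
  have := arm_drop y4v; lra.
have drop_C : v - u <= lam * (C * v).
  rewrite mulrA; apply: le_trans (drop_uv vxl) _.
  apply: ler_wpM2l; [apply: mulr_ge0; lra | lra].
have : lam * (C * v) <= lam * (Tr * v).
  by apply: ler_wpM2l; [lra | apply: ler_wpM2r; lra].
lra.
Qed.

Lemma pendant_count_ge (kr Tr nr t : R) : 0 <= nr -> 1 <= kr ->
  Tr <= t * kr -> nr + 2 * nr * t + 2 * nr ^+ 2 <= Tr ->
  nr * (1 + 2 * Tr) + 2 * kr * nr ^+ 2 <= kr * Tr.
Proof.
move=> n0 k1 Tk TC.
have H1 : nr * Tr <= nr * (t * kr) by rewrite ler_wpM2l.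
have H2 : nr * 1 <= nr * kr by rewrite ler_wpM2l.
have H3 : kr * (nr + 2 * nr * t + 2 * nr ^+ 2) <= kr * Tr by rewrite ler_wpM2l //; lra.
have -> : nr * (1 + 2 * Tr) + 2 * kr * nr ^+ 2 =
  kr * (nr + 2 * nr * t + 2 * nr ^+ 2) - (nr * kr - nr * 1) - 2 * (nr * (t * kr) - nr * Tr).
  by ring.
lra.
Qed.

Lemma flux_ge_pendants (lam kr v Tr nr t Phi : R) :
  0 < lam -> 0 < v -> 1 <= kr -> 0 <= nr ->
  lam * v * Tr <= Phi -> Phi <= lam * v * (1 + 2 * Tr) ->
  Tr <= t * kr -> nr + 2 * nr * t + 2 * nr ^+ 2 <= Tr ->
  nr * Phi + 2 * kr * (lam * nr ^+ 2 * v) <= kr * Phi.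
Proof.
move=> l0 v0 k1 n0 P1 P2 Tk TC.
have lv0 : 0 <= lam * v by rewrite mulr_ge0 // ltW.
have := ler_wpM2l lv0 (pendant_count_ge n0 k1 Tk TC).
have : nr * Phi <= nr * (lam * v * (1 + 2 * Tr)) by rewrite ler_wpM2l.
have : kr * (lam * v * Tr) <= kr * Phi by rewrite ler_wpM2l //; lra.
rewrite (_ : lam * v * (nr * (1 + 2 * Tr) + 2 * kr * nr ^+ 2) =
  nr * (lam * v * (1 + 2 * Tr)) + 2 * kr * (lam * nr ^+ 2 * v)); last by ring.
rewrite (_ : lam * v * (kr * Tr) = kr * (lam * v * Tr)); last by ring.
lra.
Qed.

(* If [y4 <= xl], both drops at [v] are at least [v - xl], so the flux [Phi]
   into [v] satisfies [k Phi < 2 k (v - u)], which is at most about [nr Phi]; but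
   [Phi] is of order [lam v T] and [T] is large compared to [nr t]. *)
Lemma xl_lt_y4 (lam kr u v y4 q xl Tr nr t : R) :
  0 < lam -> lam <= 1/2 -> 1 <= kr -> 0 < v -> 0 < q -> 0 <= Tr -> 0 <= nr ->
  kr * (v - xl) + kr * (v - y4) + Tr * (v - q) = lam * v -> q - v = lam * q ->
  (y4 <= v -> kr * (v - y4) < v - u) -> xl < v ->
  v - u <= nr * (v - xl) + lam * nr ^+ 2 * v ->
  Tr <= t * kr -> nr + 2 * nr * t + 2 * nr ^+ 2 <= Tr -> xl < y4.
Proof.
move=> l0 l1 k1 v0 q0 T0 n0 eq_v eq_q arm_drop xlv drop_uv Tk TC.
rewrite ltNge; apply/negP => y4xl.
have vq : v <= q by have := mulr_gt0 l0 q0; move: eq_q; lra.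
have q2v : q <= 2 * v.
  have : lam * q <= 1/2 * q by rewrite ler_wpM2r //; lra.
  by move: eq_q; lra.
set Phi := lam * v + lam * (Tr * q).
have flux : kr * (v - xl) + kr * (v - y4) = Phi.
  have : Tr * (q - v) = lam * (Tr * q) by rewrite eq_q; ring.
  by move: eq_v; rewrite /Phi !mulrBr; lra.
have d1 : kr * (v - xl) <= kr * (v - y4) by rewrite ler_wpM2l //; lra.
have d0 : 0 < kr * (v - xl) by rewrite mulr_gt0 //; lra.
have Phi_lt : Phi < 2 * (v - u) by have := arm_drop ltac:(lra); lra.
have h1 : kr * Phi < kr * (2 * (v - u)) by rewrite ltr_pM2l //; lra.
have h2 : kr * (2 * (v - u)) <= kr * (2 * (nr * (v - xl) + lam * nr ^+ 2 * v)).
  by rewrite ler_wpM2l //; lra.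
have h3 : nr * (2 * (kr * (v - xl))) <= nr * Phi by rewrite ler_wpM2l //; lra.
have P1 : lam * v * Tr <= Phi.
  have : lam * (Tr * v) <= lam * (Tr * q) by rewrite !ler_wpM2l // ltW.
  rewrite /Phi (_ : lam * v * Tr = lam * (Tr * v)); last by ring.
  by have := mulr_gt0 l0 v0; lra.
have P2 : Phi <= lam * v * (1 + 2 * Tr).
  have : lam * (Tr * q) <= lam * (Tr * (2 * v)) by rewrite !ler_wpM2l // ltW.
  rewrite /Phi (_ : lam * v * (1 + 2 * Tr) = lam * v + lam * (Tr * (2 * v))); last by ring.
  lra.
have := flux_ge_pendants l0 v0 k1 n0 P1 P2 Tk TC.
rewrite (_ : kr * (2 * (nr * (v - xl) + lam * nr ^+ 2 * v)) =
  nr * (2 * (kr * (v - xl))) + 2 * kr * (lam * nr ^+ 2 * v)) in h2; last by ring.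
lra.
Qed.

End BalanceInequalities.

Section OrdinalSums.
Variable M : nmodType.

Lemma sum_ord_val_eq n (F : 'I_n.+1 -> M) m :
  \sum_(i < n.+1) (if val i == m then F i else 0) =
  if (m < n.+1)%N then F (inord m) else 0.
Proof.
case: ifP => Hm.
  rewrite -big_mkcond (big_pred1 (inord m)) // => i /=.
  by apply/eqP/eqP => [<-|->]; [rewrite inord_val | rewrite inordK].
by rewrite big1 // => i _; case: eqP => // E; move: (ltn_ord i); rewrite E Hm.
Qed.

Lemma sum_ord_eq_or n (G : 'I_n -> M) r (A B : bool) :
  \sum_(r0 < n) (if (r == r0) && A || (r0 == r) && B then G r0 else 0) =
  if A || B then G r else 0.
Proof.
rewrite (bigD1 r) //= eqxx /= big1 ?addr0 // => r0 /negbTE ne.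
by rewrite [r == r0]eq_sym ne.
Qed.

Lemma sum_ord_adjacent n (F : 'I_n.+1 -> M) (i : nat) :
  \sum_(j < n.+1) (if (val j == i.+1) || (i == (val j).+1) then F j else 0) =
  (if (i.+1 < n.+1)%N then F (inord i.+1) else 0) +
  (if (0 < i)%N && (i.-1 < n.+1)%N then F (inord i.-1) else 0).
Proof.
rewrite -(sum_ord_val_eq F i.+1).
have -> : (if (0 < i)%N && (i.-1 < n.+1)%N then F (inord i.-1) else 0) =
    \sum_(j < n.+1) (if val j == i.-1 then (if (0 < i)%N then F j else 0) else 0).
  case: (ltnP 0 i) => _ /=; first by rewrite (sum_ord_val_eq F i.-1).
  by rewrite big1 // => j _; case: ifP.
rewrite -big_split /=; apply: eq_bigr => j _.
case: (ltnP 0 i) => [i0|]; last by rewrite leqn0 => /eqP ->; rewrite orbF if_same addr0.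
have -> : (i == (val j).+1) = (val j == i.-1) by apply/eqP/eqP; lia.
change (\val j) with (nat_of_ord j).
case: (eqVneq (nat_of_ord j) i.+1) => [->|_] /=; last by rewrite add0r.
have -> : (i.+1 == i.-1) = false by apply/eqP; lia.
by rewrite addr0.
Qed.

Lemma sum_ord_const n (F : 'I_n -> M) c : (forall r, F r = c) -> \sum_r F r = c *+ n.
Proof. by move=> Fc; rewrite (eq_bigr (fun _ => c)) // sumr_const card_ord. Qed.

End OrdinalSums.

Section HGraph.
Variables (R : realType) (l k T : nat).
Local Notation V := (hvert l k T).

Lemma hadj_sym : symmetric (@hadj l k T).
Proof. by move=> x y; rewrite /hadj orbC. Qed.

Lemma sum_hvert (F : V -> R) :
  \sum_y F y = F HU + F HV + \sum_i \sum_r F (HX i r) + \sum_r F (HY1 r)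
     + \sum_r F (HY4 r) + F HY2 + F HY3 + \sum_j F (HPU j) + \sum_j F (HPV j).
Proof.
rewrite (reindex (@hdecode l k T)); last first.
  exists (@hencode l k T) => x _; last by case: x.
  by case: x => [[[[[]|[]]|[]]|[]]|[[[]|[]]|[]]].
rewrite !big_sumType /= !sumr_const !card_unit !mulr1n.
rewrite pair_bigA /= (eq_bigr (fun p => F (HX p.1 p.2))); last by case.
by rewrite !addrA.
Qed.

Lemma lap_hvertE (g : V -> R) x :
  lap (@hadj l k T) g x =
  let F y := if hadj x y then g x - g y else 0 in
  F HU + F HV + \sum_i \sum_r F (HX i r) + \sum_r F (HY1 r)
     + \sum_r F (HY4 r) + F HY2 + F HY3 + \sum_j F (HPU j) + \sum_j F (HPV j).
Proof. by rewrite lapE big_mkcond sum_hvert. Qed.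

End HGraph.

Section Eigenvector.
Variables (R : realType) (l' k' T : nat).
Local Notation l := l'.+1.
Local Notation k := k'.+1.
Local Notation V := (hvert l k T).
Variables (i0 : 'I_T) (f : V -> R) (lam : R).
Hypothesis f_u1 : f (HPU i0) = 0.
Hypothesis f_gt0 : forall x, x != HPU i0 -> 0 < f x.
Hypothesis f_eig : forall x, x != HPU i0 -> lap (@hadj l k T) f x = lam * f x.

Local Notation fu := (f HU).
Local Notation fv := (f HV).

Ltac lap_simpl := rewrite lap_hvertE /hadj /= ?big1_eq ?addr0 ?add0r.

Lemma eig_PV j : f (HPV j) - fv = lam * f (HPV j).
Proof. by rewrite -f_eig //; lap_simpl. Qed.

Lemma eig_PU j : j != i0 -> f (HPU j) - fu = lam * f (HPU j).
Proof. by move=> ji; rewrite -f_eig; [lap_simpl | apply: contraNneq ji => -[->]]. Qed.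

Lemma eig_Y1 r : (f (HY1 r) - fu) + (f (HY1 r) - f HY2) = lam * f (HY1 r).
Proof. by rewrite -f_eig //; lap_simpl. Qed.

Lemma eig_Y4 r : (f (HY4 r) - f HY3) + (f (HY4 r) - fv) = lam * f (HY4 r).
Proof. by rewrite -f_eig //; lap_simpl; rewrite addrC. Qed.

Lemma eig_Y2 : \sum_r (f HY2 - f (HY1 r)) + (f HY2 - f HY3) = lam * f HY2.
Proof. by rewrite -f_eig //; lap_simpl. Qed.

Lemma eig_Y3 : \sum_r (f HY3 - f (HY4 r)) + (f HY3 - f HY2) = lam * f HY3.
Proof. by rewrite -f_eig //; lap_simpl. Qed.

Lemma eig_V : \sum_r (fv - f (HX ord_max r)) + \sum_r (fv - f (HY4 r))
  + \sum_j (fv - f (HPV j)) = lam * fv.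
Proof.
rewrite -f_eig //; lap_simpl; congr (_ + _ + _).
rewrite exchange_big; apply: eq_bigr => r _.
rewrite (sum_ord_val_eq (fun i => fv - f (HX i r)) l') ltnSn.
by congr (_ - f (HX _ r)); apply: val_inj; rewrite /= inordK.
Qed.

Definition xpath r (j : nat) : R :=
  match j with
  | 0 => fu
  | j'.+1 => if (j' < l)%N then f (HX (inord j') r) else fv
  end.

Lemma xpath_three_term r : three_term lam (xpath r) l.+1.
Proof.
move=> [|j] // /andP [_ jl]; have {}jl : (j < l)%N := jl.
have := f_eig (x := HX (inord j) r) isT; lap_simpl.
under eq_bigr do rewrite sum_ord_eq_or.
rewrite (sum_ord_adjacent (fun i => f (HX (inord j) r) - f (HX i r))) inordK //.
rewrite /= jl mulrBl orbF.
case: j jl => [|j] jl /=; repeat (case: ifP => /= ?); first [lra | lia].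
Qed.

Lemma f_ge0 x : 0 <= f x.
Proof. by case: (eqVneq x (HPU i0)) => [->|/f_gt0/ltW] //; rewrite f_u1. Qed.

Lemma lam_sum_f : lam * \sum_x f x = fu.
Proof.
have := sum_lap_eq0 f (@hadj_sym l k T).
rewrite (bigD1 (HPU i0)) //= (eq_bigr (fun x => lam * f x)); last by move=> x /f_eig.
rewrite -mulr_sumr (bigD1 (HPU i0) (P := xpredT)) //= f_u1 add0r.
lap_simpl; rewrite f_u1 sub0r.
by move=> /eqP; rewrite addrC subr_eq0 => /eqP.
Qed.

Lemma lam_gt0 : 0 < lam.
Proof.
have S0 : 0 <= \sum_x f x by apply: sumr_ge0 => x _; apply: f_ge0.
rewrite ltNge; apply/negP => l0.
have := mulr_le0_ge0 l0 S0; rewrite lam_sum_f.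
by have := f_gt0 (x := HU) isT; lra.
Qed.

Lemma lam_lt1 : lam < 1.
Proof.
have := eig_PV i0; have := f_gt0 (x := HPV i0) isT; have := f_gt0 (x := HV) isT.
move=> v0 q0 e; have : lam * f (HPV i0) < 1 * f (HPV i0) by lra.
by rewrite ltr_pM2r.
Qed.

Lemma sum_PU_le : \sum_j f (HPU j) <= \sum_x f x.
Proof.
rewrite sum_hvert.
have s1 : 0 <= \sum_i \sum_r f (HX i r) by do 2 (apply: sumr_ge0 => ? _); apply: f_ge0.
have s2 : 0 <= \sum_r f (HY1 r) by apply: sumr_ge0 => ? _; apply: f_ge0.
have s3 : 0 <= \sum_r f (HY4 r) by apply: sumr_ge0 => ? _; apply: f_ge0.
have s4 : 0 <= \sum_j f (HPV j) by apply: sumr_ge0 => ? _; apply: f_ge0.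
have := f_ge0 HU; have := f_ge0 HV; have := f_ge0 HY2; have := f_ge0 HY3.
lra.
Qed.

(* The [T - 1] pendant vertices [u_j], [j != i0], each carry at least [f u],
   while [lam * \sum_x f x = f u]. *)
Lemma lam_pendant_le1 : lam * (T%:R - 1) <= 1.
Proof.
have u0 := f_gt0 (x := HU) isT.
have l0 := lam_gt0.
have h : \sum_(j < T) (fu - (if j == i0 then fu else 0)) <= \sum_j f (HPU j).
  apply: ler_sum => j _; case: eqVneq => [->|ji]; first by rewrite f_u1 subrr.
  by have := eig_PU ji; have := mulr_ge0 (ltW l0) (f_ge0 (HPU j)); lra.
rewrite sumrB sumr_const card_ord -big_mkcond big_pred1_eq in h.
have : lam * (fu *+ T - fu) <= lam * \sum_x f x.
  by rewrite ler_wpM2l ?(ltW l0) // (le_trans h sum_PU_le).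
rewrite lam_sum_f => h2.
have : lam * (T%:R - 1) * fu <= 1 * fu by rewrite -mulrA mulrBl !mul1r mulr_natl.
by rewrite ler_pM2r.
Qed.

Lemma fY1_const r : f (HY1 r) = f (HY1 ord0).
Proof.
have := eig_Y1 r; have := eig_Y1 ord0; have := lam_lt1 => l1 e1 e2.
apply: (mulfI (x := 2 - lam)); first by apply/eqP; lra.
by rewrite !mulrBl; lra.
Qed.

Lemma fY4_const r : f (HY4 r) = f (HY4 ord0).
Proof.
have := eig_Y4 r; have := eig_Y4 ord0; have := lam_lt1 => l1 e1 e2.
apply: (mulfI (x := 2 - lam)); first by apply/eqP; lra.
by rewrite !mulrBl; lra.
Qed.

Lemma fPV_const j : f (HPV j) = f (HPV i0).
Proof.
have := eig_PV j; have := eig_PV i0; have := lam_lt1 => l1 e1 e2.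
apply: (mulfI (x := 1 - lam)); first by apply/eqP; lra.
by rewrite !mulrBl; lra.
Qed.

Local Notation nr := ((l.+1)%:R : R).
Hypothesis T_large : 2 * (nr + 1) ^+ 3 + 1 <= T%:R.

Lemma nr_ge1 : 1 <= nr. Proof. by rewrite ler1n. Qed.

Let nr_sq_succ_le_cube : nr ^+ 2 * (nr + 1) <= (nr + 1) ^+ 3.
Proof.
rewrite (_ : (nr + 1) ^+ 3 = nr ^+ 2 * (nr + 1) + (2 * nr ^+ 2 + 3 * nr + 1)); last by ring.
by have := sqr_ge0 nr; have := nr_ge1; lra.
Qed.

Lemma lam_cube_le_half : lam * (nr + 1) ^+ 3 <= 1/2.
Proof.
have := lam_pendant_le1; have := T_large => hT h.
have : lam * (2 * (nr + 1) ^+ 3) <= lam * (T%:R - 1).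
  by apply: ler_wpM2l; [exact: ltW lam_gt0 | lra].
rewrite (_ : lam * _ = 2 * (lam * (nr + 1) ^+ 3)); last by ring.
lra.
Qed.

Lemma lam_le_half : lam <= 1/2.
Proof.
have := lam_cube_le_half; have := nr_ge1 => n1.
have : 1 <= (nr + 1) ^+ 3 by rewrite exprn_ege1 //; lra.
move=> h; have : lam * 1 <= lam * (nr + 1) ^+ 3.
  by apply: ler_wpM2l; [exact: ltW lam_gt0 | lra].
lra.
Qed.

Lemma lam_sq_succ_le_half : lam * nr ^+ 2 * (nr + 1) <= 1/2.
Proof.
have := lam_cube_le_half.
have : lam * (nr ^+ 2 * (nr + 1)) <= lam * (nr + 1) ^+ 3.
  by apply: ler_wpM2l; [exact: ltW lam_gt0 | exact: nr_sq_succ_le_cube].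
rewrite mulrA; lra.
Qed.

Lemma lam_sq_lt1 : lam * nr ^+ 2 < 1.
Proof.
have := lam_sq_succ_le_half; have := nr_ge1 => n1.
have : lam * nr ^+ 2 * 1 <= lam * nr ^+ 2 * (nr + 1).
  by apply: ler_wpM2l; [rewrite mulr_ge0 ?exprn_ge0 // ltW ?lam_gt0 | lra].
lra.
Qed.

Lemma xpath_indep r j : (j <= l.+1)%N -> xpath r j = xpath ord0 j.
Proof.
apply: (three_term_unique (ltW lam_gt0) lam_sq_lt1 _ (xpath_three_term r)
  (xpath_three_term ord0)) => //=.
by rewrite ltnn.
Qed.

Lemma xpath_gt0 r j : 0 < xpath r j.
Proof. by case: j => [|j] /=; [exact: f_gt0 | case: ifP => _; exact: f_gt0]. Qed.

Lemma f_HX (i : 'I_l) r : f (HX i r) = xpath ord0 (val i).+1.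
Proof. by rewrite -(xpath_indep r) /= ?(ltn_ord i) ?inord_val //; exact: ltnW (ltn_ord i). Qed.

Local Notation fxl := (xpath ord0 l).

Lemma eig_V_sym :
  k%:R * (fv - fxl) + k%:R * (fv - f (HY4 ord0)) + T%:R * (fv - f (HPV i0)) = lam * fv.
Proof.
rewrite -eig_V !mulr_natl.
rewrite (sum_ord_const (c := fv - fxl)); last by move=> r; rewrite f_HX.
rewrite (sum_ord_const (c := fv - f (HY4 ord0))); last by move=> r; rewrite fY4_const.
by rewrite (sum_ord_const (c := fv - f (HPV i0))) // => j; rewrite fPV_const.
Qed.

Lemma eig_Y3_sym : k%:R * (f HY3 - f (HY4 ord0)) + (f HY3 - f HY2) = lam * f HY3.
Proof.
by rewrite -eig_Y3 mulr_natl (sum_ord_const (c := f HY3 - f (HY4 ord0))) // => r; rewrite fY4_const.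
Qed.

Lemma eig_Y2_sym : k%:R * (f HY2 - f (HY1 ord0)) + (f HY2 - f HY3) = lam * f HY2.
Proof.
by rewrite -eig_Y2 mulr_natl (sum_ord_const (c := f HY2 - f (HY1 ord0))) // => r; rewrite fY1_const.
Qed.

Lemma xpath_last r : xpath r l.+1 = fv. Proof. by rewrite /= ltnn. Qed.

Lemma fv_sub_fu_le_steps : fxl < fv -> fv - fu <= nr * (fv - fxl) + lam * nr ^+ 2 * fv.
Proof.
move=> xlv.
have l0 := ltW lam_gt0.
have gp j : (0 < j < l.+1)%N -> 0 <= xpath ord0 j by move=> _; exact: ltW (xpath_gt0 _ _).
have dn : 0 < xpath ord0 l.+1 - xpath ord0 l by rewrite xpath_last; lra.
have gv j : (0 < j < l.+1)%N -> xpath ord0 j <= fv.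
  move=> /andP[_ jl]; rewrite -(xpath_last ord0).
  exact: three_term_le_last l0 (xpath_three_term ord0) gp dn _ (ltnW jl).
have := three_term_le_linear l0 (f_ge0 HV) (xpath_three_term ord0) gv (leqnn l.+1).
rewrite xpath_last [xpath _ 0]/= => h.
rewrite (_ : _ + _ = nr * (fv - fxl + lam * nr * fv)); last by ring.
lra.
Qed.

Let S := \sum_(j < l.+2) xpath ord0 j.

Let xpath_le_S j : (j < l.+2)%N -> xpath ord0 j <= S.
Proof.
move=> jl; rewrite /S (bigD1 (Ordinal jl)) //= lerDl.
by apply: sumr_ge0 => i _; exact: ltW (xpath_gt0 _ _).
Qed.

Let xpath_le_linear j : (j <= l.+1)%N ->
  xpath ord0 j <= fu + j%:R * (fv - fxl + lam * nr * S).
Proof.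
have S0 : 0 <= S by apply: le_trans (xpath_le_S (j := 0) isT); exact: ltW (xpath_gt0 _ _).
have := three_term_le_linear (ltW lam_gt0) S0 (xpath_three_term ord0).
by rewrite xpath_last; apply => i /andP[_ il]; apply: xpath_le_S; exact: ltnW.
Qed.

Lemma sum_xpath_le : fv <= fxl -> S <= 2 * (nr + 1) * fu.
Proof.
move=> vxl.
have S0 : 0 <= S by apply: le_trans (xpath_le_S (j := 0) isT); exact: ltW (xpath_gt0 _ _).
have X0 : 0 <= lam * nr * S by rewrite !mulr_ge0 // ltW ?lam_gt0.
have hj j : (j <= l.+1)%N -> xpath ord0 j <= fu + nr * (lam * nr * S).
  move=> jl; apply: le_trans (xpath_le_linear jl) _; rewrite lerD2l.
  have jr : j%:R <= nr by rewrite ler_nat.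
  case: (lerP 0 (fv - fxl + lam * nr * S)) => hX.
    by apply: le_trans (ler_wpM2r hX jr) _; rewrite ler_wpM2l //; lra.
  have : j%:R * (fv - fxl + lam * nr * S) <= 0 by rewrite mulr_ge0_le0 // ltW.
  have : 0 <= nr * (lam * nr * S) by rewrite mulr_ge0.
  lra.
have : S <= \sum_(j < l.+2) (fu + nr * (lam * nr * S)).
  by apply: ler_sum => j _; apply: hj; rewrite -ltnS.
have -> : \sum_(j < l.+2) (fu + nr * (lam * nr * S)) = (nr + 1) * (fu + nr * (lam * nr * S)).
  by rewrite sumr_const card_ord natr1 [RHS]mulr_natl.
have : lam * nr ^+ 2 * (nr + 1) * S <= 1/2 * S by rewrite ler_wpM2r // lam_sq_succ_le_half.
rewrite (_ : (nr + 1) * _ = (nr + 1) * fu + lam * nr ^+ 2 * (nr + 1) * S); last by ring.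
lra.
Qed.

Lemma fv_sub_fu_small : fv <= fxl -> fv - fu <= lam * (2 * nr ^+ 2 * (nr + 1)) * fu.
Proof.
move=> vxl.
have := xpath_le_linear (leqnn l.+1); rewrite xpath_last => h.
have : nr * (fv - fxl) <= 0 by rewrite mulr_ge0_le0 //; lra.
have : lam * nr ^+ 2 * S <= lam * nr ^+ 2 * (2 * (nr + 1) * fu).
  by rewrite ler_wpM2l ?sum_xpath_le // mulr_ge0 ?exprn_ge0 // ltW ?lam_gt0.
rewrite (_ : nr * (_ + _) = nr * (fv - fxl) + lam * nr ^+ 2 * S) in h; last by ring.
rewrite (_ : lam * (_ * nr ^+ 2 * _) * fu = lam * nr ^+ 2 * (2 * (nr + 1) * fu)); last by ring.
lra.
Qed.

Variable t : R.
Hypothesis T_le_tk : T%:R <= t * k%:R.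
Hypothesis T_large_t : nr + 2 * nr * t + 2 * nr ^+ 2 <= T%:R.

Let arm_drop : f (HY4 ord0) <= fv -> k%:R * (fv - f (HY4 ord0)) < fv - fu.
Proof.
exact: (arm_drop_lt lam_gt0 lam_le_half (ler1n R k) (f_gt0 (x := HY2) isT)
  (f_gt0 (x := HY3) isT) (f_gt0 (x := HY4 ord0) isT)
  (eig_Y1 ord0) eig_Y2_sym eig_Y3_sym (eig_Y4 ord0)).
Qed.

Lemma fxl_lt_fv : fxl < fv.
Proof.
have := nr_ge1; have := T_large => hT n1.
apply: (xl_lt_v lam_gt0 (ler1n R k) (f_gt0 (x := HV) isT) (f_gt0 (x := HPV i0) isT)
  (ler0n R T) _ eig_V_sym (eig_PV i0) arm_drop fv_sub_fu_small).
  by rewrite !mulr_ge0 ?exprn_ge0 //; lra.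
by have := nr_sq_succ_le_cube; lra.
Qed.

Lemma fxl_lt_fy4 : fxl < f (HY4 ord0).
Proof.
exact: (xl_lt_y4 lam_gt0 lam_le_half (ler1n R k) (f_gt0 (x := HV) isT)
  (f_gt0 (x := HPV i0) isT) (ler0n R T) (ler0n R l.+1) eig_V_sym (eig_PV i0)
  arm_drop fxl_lt_fv (fv_sub_fu_le_steps fxl_lt_fv) T_le_tk T_large_t).
Qed.

Lemma xpath_increasing j : (0 < j <= l.+1)%N -> xpath ord0 j.-1 < xpath ord0 j.
Proof.
move=> jl; have gp i : (0 < i < l.+1)%N -> 0 <= xpath ord0 i by move=> _; exact: ltW (xpath_gt0 _ _).
have dn : 0 < xpath ord0 l.+1 - xpath ord0 l by rewrite xpath_last; have := fxl_lt_fv; lra.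
have := three_term_increment_gt0 (ltW lam_gt0) (xpath_three_term ord0) gp dn jl.
lra.
Qed.

Variable p : V -> V.
Hypothesis p_spectral : spectral_parent (@hadj l k T) (HPU i0) f p.

Lemma parent_v1 : p (HPV i0) = HV.
Proof. by have [] := p_spectral (x := HPV i0) isT; case: (p (HPV i0)). Qed.

Lemma parent_u : p HU = HPU i0.
Proof.
have [_ pmin] := p_spectral (x := HU) isT.
have := pmin (HPU i0) isT; rewrite f_u1.
case: (eqVneq (p HU) (HPU i0)) => // /f_gt0 /lt_le_trans h /h.
by rewrite ltxx.
Qed.

Lemma parent_v : exists r, p HV = HX ord_max r.
Proof.
have [adj_p pmin] := p_spectral (x := HV) isT.
have := pmin (HX ord_max ord0); rewrite /hadj /= eqxx f_HX => /(_ isT) pv.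
move: adj_p pv; case: (p HV) => //.
- by move=> i r /= /eqP il _; exists r; congr HX; exact: val_inj.
- by move=> r _; rewrite fY4_const; have := fxl_lt_fy4; lra.
- move=> j _; rewrite fPV_const.
  have := fxl_lt_fv; have := eig_PV i0; have := f_gt0 (x := HPV i0) isT.
  by have := lam_gt0 => l0 q0 e xv; have := mulr_gt0 l0 q0; lra.
Qed.

Lemma parent_x (i : 'I_l) r :
  p (HX i r) = if val i == 0%N then HU else HX (inord (val i).-1) r.
Proof.
case: i => j jl /=.
have [adj_p pmin] := p_spectral (x := HX (Ordinal jl) r) isT.
have incr := xpath_increasing (j := j.+1) (ltnW jl).
have incr2 : xpath ord0 j < xpath ord0 j.+2.
  exact: lt_trans incr (xpath_increasing (j := j.+2) jl).
set q := if j == 0%N then HU else HX (inord j.-1) r.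
have fq : f q = xpath ord0 j.
  rewrite /q; case: eqP => [->|/eqP j0] //.
  by rewrite f_HX (_ : (val (inord j.-1 : 'I_l)).+1 = j) // /= inordK; lia.
have adj_q : hadj (HX (Ordinal jl) r) q.
  rewrite /q /hadj; case: eqP => [j0|/eqP j0] /=; first exact/eqP.
  by rewrite eqxx inordK /=; [apply/orP; right; apply/eqP; lia | lia].
move: adj_p (pmin _ adj_q); rewrite fq /hadj.
case: (p (HX (Ordinal jl) r)) => [| |i1 r1|r1|r1| | |j1|j1] //=.
- by move=> j0 _; rewrite /q j0.
- rewrite orbF => /eqP jl' h; exfalso.
  have e : xpath ord0 j.+2 = fv by rewrite jl' xpath_last.
  lra.
- move=> /orP[/andP[/eqP <- /eqP e1]|/andP[/eqP -> /eqP e2]].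
    rewrite f_HX; change (\val i1) with (nat_of_ord i1).
    by rewrite e1 => h; exfalso; lra.
  move=> _; rewrite /q (_ : (j == 0%N) = false); last by apply/eqP; lia.
  by congr HX; apply: val_inj; rewrite /= inordK; lia.
Qed.

Lemma iter_parent_x (i : 'I_l) r :
  iter (val i).+1 p (HX i r) = HU /\
  forall m, (m <= val i)%N -> iter m p (HX i r) != HPU i0.
Proof.
move Em: (val i) => m; elim: m i Em => [|m IH] i im.
  by split=> [|[]] //=; rewrite parent_x im.
have ml : (m < l)%N by move: (ltn_ord i); rewrite im => /ltnW.
have pi : p (HX i r) = HX (inord m) r by rewrite parent_x im.
have [IH1 IH2] := IH (inord m) (inordK ml).
split=> [|[|m'] hm //]; rewrite iterSr pi //.
exact: IH2.
Qed.

Lemma spectral_path_v1 : spectral_path_length (HPU i0) p (HPV i0) (l + 3).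
Proof.
have [r pv] := parent_v.
have [to_u not_u1] := iter_parent_x ord_max r.
have -> : (l + 3 = l'.+1.+1.+2)%N by lia.
split; first by rewrite iterS iterSr parent_v1 iterSr pv to_u parent_u.
move=> [|[|m]] hm //; first by rewrite /= parent_v1.
rewrite !iterSr parent_v1 pv.
have [hm2|hm2] := leqP m l'; first exact: not_u1.
have -> : m = l'.+1 by lia.
by rewrite to_u.
Qed.

End Eigenvector.

Section Distance.
Variables (l k' T : nat) (i0 : 'I_T).
Local Notation k := k'.+1.
Hypothesis l_ge4 : (4 <= l)%N.
Hypothesis i0_eq0 : val i0 = 0%N.

(* The distance to [u_1], except on the paths [x_(.,r)] where it is capped at 6. *)
Definition height (x : hvert l k T) : nat :=
  match x with
  | HU => 1 | HV => 6 | HX i _ => minn (val i + 2) 6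
  | HY1 _ => 2 | HY2 => 3 | HY3 => 4 | HY4 _ => 5
  | HPU j => if val j == 0%N then 0 else 2
  | HPV _ => 7
  end.

Lemma height_lipschitz x y : hadj x y -> (height x <= height y + 1)%N.
Proof.
rewrite /hadj; case: x => [| |i r|r|r| | |j|j]; case: y => [| |i1 r1|r1|r1| | |j1|j1] //=;
  rewrite ?orbF; try (case: ifP => //=); try (case: ifP => //=); try lia;
  move=> /orP[/andP[_ /eqP]|/andP[_ /eqP]]; lia.
Qed.

Lemma height_path x q : path (@hadj l k T) x q -> (height x <= height (last x q) + size q)%N.
Proof.
elim: q x => [|y q IH] x /=; first by rewrite addn0.
by move=> /andP[/height_lipschitz xy /IH]; lia.
Qed.

Lemma gdist_v1_u1 : gdist (@hadj l k T) (HPV i0) (HPU i0) 7.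
Proof.
split; last by move=> q /height_path + lq; rewrite lq /= i0_eq0 /=; lia.
by exists [:: HV; HY4 ord0; HY3; HY2; HY1 ord0; HU; HPU i0].
Qed.

End Distance.

Lemma Tof_large (R : realType) (t c : R) : 0 < t ->
  exists K, forall k, (K <= k)%N -> c <= (Tof t k)%:R /\ (Tof t k)%:R <= t * k%:R.
Proof.
move=> t0; exists (Num.truncn ((c + 1) / t)).+1 => k Kk.
have tk : c + 1 < t * k%:R.
  have : (c + 1) / t < k%:R.
    by apply: lt_le_trans (truncnS_gt _) _; rewrite ler_nat.
  by rewrite ltr_pdivrMr // mulrC.
have tk0 : 0 <= t * k%:R by rewrite mulr_ge0 // ltW.
have := truncnS_gt (t * k%:R); rewrite /Tof -natr1 truncn_le tk0; lra.
Qed.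

Theorem theorem19 (R : realType) (l : nat) (t : R) :
  (6 < l)%N -> 0 < t ->
  exists K : nat, forall k : nat, (2 < k)%N -> (K <= k)%N ->
    (0 < Tof t k)%N /\
    forall i0 : 'I_(Tof t k), val i0 = 0%N ->
      let u1 : hvert l k (Tof t k) := HPU i0 in
      let v1 : hvert l k (Tof t k) := HPV i0 in
      gdist (@hadj l k (Tof t k)) v1 u1 7 /\
      forall (f : hvert l k (Tof t k) -> R) (p : hvert l k (Tof t k) -> hvert l k (Tof t k)),
        is_fs (@hadj l k (Tof t k)) u1 f ->
        spectral_parent (@hadj l k (Tof t k)) u1 f p ->
        spectral_path_length u1 p v1 (l + 3).
Proof.
case: l => [//|l'] l_gt6 t_gt0.
pose nr : R := (l'.+2)%:R.
pose c1 := 2 * (nr + 1) ^+ 3 + 1.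
pose c2 := nr + 2 * nr * t + 2 * nr ^+ 2.
have [c1_ge1 c2_ge0] : 1 <= c1 /\ 0 <= c2.
  have n0 : 0 <= nr by exact: ler0n.
  have : 0 <= nr * t by rewrite mulr_ge0 // ltW.
  have : 0 <= (nr + 1) ^+ 3 by rewrite exprn_ge0 // addr_ge0.
  by rewrite /c1 /c2; have := sqr_ge0 nr; split; lra.
have [K HK] := Tof_large (c1 + c2) t_gt0.
exists K => -[//|k'] _ /HK [T_large T_le_tk].
have T_ge_c1 : c1 <= (Tof t k'.+1)%:R by lra.
have T_ge_c2 : c2 <= (Tof t k'.+1)%:R by lra.
split=> [|i0 i0_eq0]; first by rewrite -(ltr0n R); lra.
split; first by apply: gdist_v1_u1 => //; lia.
move=> f p [[lam [[f_u1 [_ f_eig]] _]] f_gt0] p_spectral.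
exact: (spectral_path_v1 f_u1 f_gt0 f_eig T_ge_c1 T_le_tk T_ge_c2 p_spectral).
Qed.
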